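(* Let $k\ge2$, $d=2k+1$, and let $u,v$ be smooth functions of $(x^1,\dots,x^{d})$ satisfying $$u_1+v_2=\sum_{s=2}^{k}(u_{2s-1}v_{2s}-u_{2s}v_{2s-1}),\qquad u_2+v_3=\sum_{s=2}^{k}(u_{2s}v_{2s+1}-u_{2s+1}v_{2s}).$$ For a parameter $\lambda$ set $\alpha_{2s-1}=1$, $\alpha_{2s}=\lambda$, and $$X=\partial_2+\lambda\partial_3-\sum_{i=3}^{2k}\alpha_i(u_i\partial_{i+1}-u_{i+1}\partial_i),\qquad Y=\partial_1+\lambda\partial_2+\sum_{i=3}^{2k}\alpha_i(v_i\partial_{i+1}-v_{i+1}\partial_i).$$ Then $[X,Y]=0$ for all $\lambda$.
   Context: $\partial_i=\partial/\partial x^i$, $u_i=\partial u/\partial x^i$, $v_i=\partial v/\partial x^i$; $[X,Y]$ is the Lie bracket of vector fields on the space of $x$'s. *)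

From Stdlib Require Import Reals Lra Lia List ClassicalEpsilon.
Open Scope R_scope.

(* Points of R^d are represented as x : nat -> R, coordinates x 1, ..., x d.
   Functions on R^d are functions (nat -> R) -> R that depend only on the
   coordinates 1..d. *)
Definition point := nat -> R.

Definition depends_only (d : nat) (f : point -> R) : Prop :=
  forall x y : point, (forall i, (1 <= i <= d)%nat -> x i = y i) -> f x = f y.

Definition upd (x : point) (i : nat) (t : R) : point :=
  fun j => if Nat.eqb j i then x i + t else x j.

(* partial derivative d f / d x^i (chosen classically; meaningful when it exists) *)
Definition pd (i : nat) (f : point -> R) : point -> R :=
  fun x => epsilon (inhabits 0%R)
             (fun l => derivable_pt_lim (fun t => f (upd x i t)) 0 l).

Definition pds (l : list nat) (f : point -> R) : point -> R :=
  fold_right pd f l.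

Definition cont_d (d : nat) (g : point -> R) : Prop :=
  forall (x : point) (eps : R), 0 < eps -> exists delta, 0 < delta /\
    forall y : point, (forall i, (1 <= i <= d)%nat -> Rabs (y i - x i) < delta) ->
      Rabs (g y - g x) < eps.

Definition smooth (d : nat) (f : point -> R) : Prop :=
  depends_only d f /\
  forall l : list nat, Forall (fun i => (1 <= i <= d)%nat) l ->
    cont_d d (pds l f) /\
    forall (i : nat) (x : point), (1 <= i <= d)%nat ->
      exists D, derivable_pt_lim (fun t => pds l f (upd x i t)) 0 D.

Fixpoint rsum (m n : nat) (F : nat -> R) : R :=
  match n with
  | O => 0
  | S n' => F m + rsum (S m) n' F
  end.

Definition sum_from_to (a b : nat) (F : nat -> R) : R := rsum a (S b - a) F.

Definition delta (i j : nat) : R := if Nat.eqb i j then 1 else 0.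

Definition vfield := nat -> point -> R.

Definition vapp (d : nat) (X : vfield) (f : point -> R) : point -> R :=
  fun x => sum_from_to 1 d (fun i => X i x * pd i f x).

Definition bracket (d : nat) (X Y : vfield) : vfield :=
  fun j x => vapp d X (Y j) x - vapp d Y (X j) x.

Definition alpha (lam : R) (i : nat) : R := if Nat.odd i then 1 else lam.

Definition Xf (k : nat) (u : point -> R) (lam : R) : vfield :=
  fun j x => delta j 2 + lam * delta j 3
    - sum_from_to 3 (2 * k) (fun i =>
        alpha lam i * (pd i u x * delta j (S i) - pd (S i) u x * delta j i)).

Definition Yf (k : nat) (v : point -> R) (lam : R) : vfield :=
  fun j x => delta j 1 + lam * delta j 2
    + sum_from_to 3 (2 * k) (fun i =>
        alpha lam i * (pd i v x * delta j (S i) - pd (S i) v x * delta j i)).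

(* Write w(a, b) = sum_{m=3}^{2k} alpha_m (a_m b_{m+1} - a_{m+1} b_m). Then
   X = d_2 + lam d_3 - w(grad u, .) and Y = d_1 + lam d_2 + w(grad v, .), and the
   two hypotheses, split according to the parity of m, say exactly that
   H := u_1 + lam u_2 + v_2 + lam v_3 - w(grad u, grad v) vanishes identically.
   As the coefficients of X and Y depend linearly on grad u and grad v, the
   bracket is [X,Y]^j = w(W, e_j) with W_q = X(v_q) + Y(u_q); by the symmetry of
   second derivatives and the antisymmetry of w, W_q = d_q H = 0. *)

From Coquelicot Require Import Coquelicot.
From Stdlib Require Import Reals Lra Lia List FunctionalExtensionality ClassicalEpsilon.
Open Scope R_scope.

Lemma rsum_ext a n F G :
  (forall i, (a <= i < a + n)%nat -> F i = G i) -> rsum a n F = rsum a n G.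
Proof.
  revert a; induction n as [|n IH]; intros a H; simpl; [reflexivity|].
  rewrite H by lia; rewrite (IH (S a)) by (intros; apply H; lia); reflexivity.
Qed.

Lemma rsum_0 a n : rsum a n (fun _ => 0) = 0.
Proof. revert a; induction n as [|n IH]; intros a; simpl; [|rewrite IH]; ring. Qed.

Lemma rsum_plus a n F G : rsum a n (fun i => F i + G i) = rsum a n F + rsum a n G.
Proof. revert a; induction n as [|n IH]; intros a; simpl; [|rewrite IH]; ring. Qed.

Lemma rsum_minus a n F G : rsum a n (fun i => F i - G i) = rsum a n F - rsum a n G.
Proof. revert a; induction n as [|n IH]; intros a; simpl; [|rewrite IH]; ring. Qed.

Lemma rsum_opp a n F : rsum a n (fun i => - F i) = - rsum a n F.
Proof. revert a; induction n as [|n IH]; intros a; simpl; [|rewrite IH]; ring. Qed.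

Lemma rsum_scal a n c F : rsum a n (fun i => c * F i) = c * rsum a n F.
Proof. revert a; induction n as [|n IH]; intros a; simpl; [|rewrite IH]; ring. Qed.

Lemma rsum_swap a n b p F :
  rsum a n (fun i => rsum b p (F i)) = rsum b p (fun j => rsum a n (fun i => F i j)).
Proof.
  revert a; induction n as [|n IH]; intros a; simpl; [symmetry; apply rsum_0|].
  rewrite IH, <- rsum_plus; reflexivity.
Qed.

Lemma rsum_delta a n F q :
  (a <= q < a + n)%nat -> rsum a n (fun i => F i * delta i q) = F q.
Proof.
  revert a; induction n as [|n IH]; intros a Hq; simpl; [lia|].
  destruct (Nat.eq_dec a q) as [<-|Hne].
  - rewrite (rsum_ext _ _ _ (fun _ => 0)), rsum_0.
    + unfold delta; rewrite Nat.eqb_refl; ring.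
    + intros i Hi; unfold delta; rewrite (proj2 (Nat.eqb_neq i a)) by lia; ring.
  - rewrite IH by lia; unfold delta; rewrite (proj2 (Nat.eqb_neq a q)) by lia; ring.
Qed.

Lemma rsum_alpha_parity lam g c n :
  rsum (2 * c + 1) (2 * n) (fun m => alpha lam m * g m)
  = rsum (c + 1) n (fun s => g (2 * s - 1)%nat + lam * g (2 * s)%nat).
Proof.
  revert c; induction n as [|n IH]; intros c; [reflexivity|].
  replace (2 * S n)%nat with (S (S (2 * n))) by lia; cbn [rsum].
  replace (S (S (2 * c + 1))) with (2 * (c + 1) + 1)%nat by lia.
  replace (S (c + 1)) with (c + 1 + 1)%nat by lia.
  rewrite IH; unfold alpha.
  replace (S (2 * c + 1)) with (2 * (c + 1))%nat by lia.
  replace (2 * (c + 1) - 1)%nat with (2 * c + 1)%nat by lia.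
  rewrite Nat.odd_odd, Nat.odd_even; ring.
Qed.

Lemma rsum_lim a n (F : nat -> R -> R) D y :
  (forall m, (a <= m < a + n)%nat -> derivable_pt_lim (F m) y (D m)) ->
  derivable_pt_lim (fun t => rsum a n (fun m => F m t)) y (rsum a n D).
Proof.
  revert a; induction n as [|n IH]; intros a H; simpl.
  - apply derivable_pt_lim_const.
  - apply (derivable_pt_lim_plus (F a) (fun t => rsum (S a) n (fun m => F m t))).
    + apply H; lia.
    + apply IH; intros; apply H; lia.
Qed.

Section AlternatingForm.
Variables (k : nat) (lam : R).

Definition omega (a b : nat -> R) : R :=
  sum_from_to 3 (2 * k) (fun m => alpha lam m * (a m * b (S m) - a (S m) * b m)).

Lemma omega_antisym a b : omega a b = - omega b a.
Proof. unfold omega, sum_from_to; rewrite <- rsum_opp; apply rsum_ext; intros; ring. Qed.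

Lemma omega_ext a a' b b' :
  (forall m, (3 <= m <= 2 * k + 1)%nat -> a m = a' m) ->
  (forall m, (3 <= m <= 2 * k + 1)%nat -> b m = b' m) ->
  omega a b = omega a' b'.
Proof.
  intros Ha Hb; unfold omega, sum_from_to; apply rsum_ext; intros m Hm.
  rewrite !Ha, !Hb by lia; reflexivity.
Qed.

Lemma omega_0_l a b : (forall m, (3 <= m <= 2 * k + 1)%nat -> a m = 0) -> omega a b = 0.
Proof.
  intros Ha; unfold omega, sum_from_to.
  rewrite <- (rsum_0 3 (S (2 * k) - 3)); apply rsum_ext; intros m Hm.
  rewrite !Ha by lia; ring.
Qed.

Lemma omega_lin_l p q a a' b :
  omega (fun m => p * a m - q * a' m) b = p * omega a b - q * omega a' b.
Proof.
  unfold omega, sum_from_to; rewrite <- !rsum_scal, <- rsum_minus.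
  apply rsum_ext; intros; ring.
Qed.

Lemma omega_sum_l i0 n c (A : nat -> nat -> R) b :
  rsum i0 n (fun i => c i * omega (A i) b)
  = omega (fun m => rsum i0 n (fun i => c i * A i m)) b.
Proof.
  unfold omega, sum_from_to.
  rewrite (rsum_ext _ _ _ (fun i => rsum 3 (S (2 * k) - 3) (fun m =>
    alpha lam m * (c i * A i m * b (S m) - c i * A i (S m) * b m))))
    by (intros; rewrite <- rsum_scal; apply rsum_ext; intros; ring).
  rewrite rsum_swap; apply rsum_ext; intros m _.
  rewrite rsum_scal, rsum_minus; f_equal.
  rewrite (rsum_ext _ _ _ (fun i => b (S m) * (c i * A i m))) by (intros; ring).
  rewrite (rsum_ext _ _ (fun i => c i * A i (S m) * b m) (fun i => b m * (c i * A i (S m))))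
    by (intros; ring).
  rewrite !rsum_scal; ring.
Qed.

Lemma omega_sum_r i0 n c a (B : nat -> nat -> R) :
  rsum i0 n (fun i => c i * omega a (B i))
  = omega a (fun m => rsum i0 n (fun i => c i * B i m)).
Proof.
  rewrite omega_antisym, <- omega_sum_l, <- rsum_opp.
  apply rsum_ext; intros; rewrite omega_antisym; ring.
Qed.

Lemma omega_parity a b :
  omega a b
  = sum_from_to 2 k (fun s => a (2 * s - 1)%nat * b (2 * s)%nat - a (2 * s)%nat * b (2 * s - 1)%nat)
    + lam * sum_from_to 2 k (fun s => a (2 * s)%nat * b (2 * s + 1)%nat - a (2 * s + 1)%nat * b (2 * s)%nat).
Proof.
  unfold omega, sum_from_to.
  replace (S (2 * k) - 3)%nat with (2 * (k - 1))%nat by lia.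
  replace (S k - 2)%nat with (k - 1)%nat by lia.
  rewrite (rsum_alpha_parity lam (fun m => a m * b (S m) - a (S m) * b m) 1), <- rsum_scal, <- rsum_plus.
  apply rsum_ext; intros s Hs.
  replace (S (2 * s - 1)) with (2 * s)%nat by lia.
  replace (S (2 * s)) with (2 * s + 1)%nat by lia; reflexivity.
Qed.

Lemma omega_lim (a b : R -> nat -> R) da db :
  (forall m, (3 <= m <= 2 * k + 1)%nat -> derivable_pt_lim (fun t => a t m) 0 (da m)) ->
  (forall m, (3 <= m <= 2 * k + 1)%nat -> derivable_pt_lim (fun t => b t m) 0 (db m)) ->
  derivable_pt_lim (fun t => omega (a t) (b t)) 0 (omega da (b 0) + omega (a 0) db).
Proof.
  intros Ha Hb; unfold omega, sum_from_to; rewrite <- rsum_plus.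
  rewrite (rsum_ext _ _ _ (fun m => alpha lam m *
    ((da m * b 0 (S m) + a 0 m * db (S m)) - (da (S m) * b 0 m + a 0 (S m) * db m))))
    by (intros; ring).
  apply (rsum_lim _ _ (fun m t => alpha lam m * (a t m * b t (S m) - a t (S m) * b t m))).
  intros m Hm.
  apply (derivable_pt_lim_scal (fun t => a t m * b t (S m) - a t (S m) * b t m)).
  apply (derivable_pt_lim_minus (fun t => a t m * b t (S m)) (fun t => a t (S m) * b t m)).
  - apply (derivable_pt_lim_mult (fun t => a t m) (fun t => b t (S m))); [apply Ha|apply Hb]; lia.
  - apply (derivable_pt_lim_mult (fun t => a t (S m)) (fun t => b t m)); [apply Ha|apply Hb]; lia.
Qed.

End AlternatingForm.

Lemma pd_of_lim i f x D : derivable_pt_lim (fun t => f (upd x i t)) 0 D -> pd i f x = D.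
Proof.
  intros H; unfold pd.
  apply (uniqueness_limite (fun t => f (upd x i t)) 0); [|exact H].
  exact (epsilon_spec (inhabits 0) _ (ex_intro _ D H)).
Qed.

Lemma upd_0 x i : upd x i 0 = x.
Proof.
  apply functional_extensionality; intros j; unfold upd.
  destruct (Nat.eqb_spec j i) as [->|]; [ring|reflexivity].
Qed.

Lemma derivable_pt_lim_shift g a l :
  derivable_pt_lim (fun t => g (a + t)) 0 l -> derivable_pt_lim g a l.
Proof.
  intros H eps Heps; destruct (H eps Heps) as [del Hdel]; exists del; intros h Hh0 Hh.
  specialize (Hdel h Hh0 Hh); cbv beta in Hdel.
  rewrite Rplus_0_l, Rplus_0_r in Hdel; exact Hdel.
Qed.

Definition upd2 (x : point) (i m : nat) (a b : R) : point :=
  fun j => if Nat.eqb j i then x i + a else if Nat.eqb j m then x m + b else x j.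

Section Smooth.
Variables (d : nat) (f : point -> R).
Hypothesis Hf : smooth d f.

Lemma smooth_pds_lim l i x :
  Forall (fun j => (1 <= j <= d)%nat) l -> (1 <= i <= d)%nat ->
  derivable_pt_lim (fun t => pds l f (upd x i t)) 0 (pd i (pds l f) x).
Proof.
  intros Hl Hi; destruct (proj2 (proj2 Hf l Hl) i x Hi) as [D HD].
  rewrite (pd_of_lim _ _ _ _ HD); exact HD.
Qed.

Lemma smooth_pd_lim m i x :
  (1 <= m <= d)%nat -> (1 <= i <= d)%nat ->
  derivable_pt_lim (fun t => pd m f (upd x i t)) 0 (pd i (pd m f) x).
Proof. intros Hm; exact (smooth_pds_lim (m :: nil) i x (Forall_cons _ Hm (Forall_nil _))). Qed.

Section Clairaut.
Variables (x : point) (i m : nat).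
Hypotheses (Hi : (1 <= i <= d)%nat) (Hm : (1 <= m <= d)%nat) (Him : i <> m).

Lemma upd_upd2_i a b t : upd (upd2 x i m a b) i t = upd2 x i m (a + t) b.
Proof.
  apply functional_extensionality; intros j; unfold upd, upd2.
  destruct (Nat.eqb j i); [rewrite Nat.eqb_refl; ring|reflexivity].
Qed.

Lemma upd_upd2_m a b t : upd (upd2 x i m a b) m t = upd2 x i m a (b + t).
Proof.
  apply functional_extensionality; intros j; unfold upd, upd2.
  rewrite (proj2 (Nat.eqb_neq m i)), Nat.eqb_refl by auto.
  destruct (Nat.eqb_spec j m) as [->|]; [|reflexivity].
  rewrite (proj2 (Nat.eqb_neq m i)) by auto; ring.
Qed.

Lemma upd2_0 : upd2 x i m 0 0 = x.
Proof.
  apply functional_extensionality; intros j; unfold upd2.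
  destruct (Nat.eqb_spec j i) as [->|]; [ring|].
  destruct (Nat.eqb_spec j m) as [->|]; [ring|reflexivity].
Qed.

Let Dom l := Forall (fun j => (1 <= j <= d)%nat) l.

Lemma is_derive_upd2_i l a b : Dom l ->
  is_derive (fun z => pds l f (upd2 x i m z b)) a (pd i (pds l f) (upd2 x i m a b)).
Proof.
  intros Hl; apply is_derive_Reals, derivable_pt_lim_shift.
  assert (E : (fun t => pds l f (upd2 x i m (a + t) b))
              = (fun t => pds l f (upd (upd2 x i m a b) i t))).
  { apply functional_extensionality; intros t; rewrite upd_upd2_i; reflexivity. }
  rewrite E; exact (smooth_pds_lim l i _ Hl Hi).
Qed.

Lemma is_derive_upd2_m l a b : Dom l ->
  is_derive (fun z => pds l f (upd2 x i m a z)) b (pd m (pds l f) (upd2 x i m a b)).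
Proof.
  intros Hl; apply is_derive_Reals, derivable_pt_lim_shift.
  assert (E : (fun t => pds l f (upd2 x i m a (b + t)))
              = (fun t => pds l f (upd (upd2 x i m a b) m t))).
  { apply functional_extensionality; intros t; rewrite upd_upd2_m; reflexivity. }
  rewrite E; exact (smooth_pds_lim l m _ Hl Hm).
Qed.

Let F a b := f (upd2 x i m a b).
Let Dom0 : Dom nil := Forall_nil _.
Let Domi : Dom (i :: nil) := Forall_cons _ Hi Dom0.
Let Domm : Dom (m :: nil) := Forall_cons _ Hm Dom0.

Lemma Derive_upd2_i a b : Derive (fun t => F t b) a = pd i f (upd2 x i m a b).
Proof. apply is_derive_unique; exact (is_derive_upd2_i nil a b Dom0). Qed.

Lemma Derive_upd2_m a b : Derive (fun t => F a t) b = pd m f (upd2 x i m a b).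
Proof. apply is_derive_unique; exact (is_derive_upd2_m nil a b Dom0). Qed.

Lemma Derive_upd2_mi a b :
  Derive (fun z => Derive (fun t => F z t) b) a = pd i (pd m f) (upd2 x i m a b).
Proof.
  rewrite (Derive_ext _ (fun z => pd m f (upd2 x i m z b))) by (intros; apply Derive_upd2_m).
  apply is_derive_unique; exact (is_derive_upd2_i _ a b Domm).
Qed.

Lemma Derive_upd2_im a b :
  Derive (fun z => Derive (fun t => F t z) a) b = pd m (pd i f) (upd2 x i m a b).
Proof.
  rewrite (Derive_ext _ (fun z => pd i f (upd2 x i m a z))) by (intros; apply Derive_upd2_i).
  apply is_derive_unique; exact (is_derive_upd2_m _ a b Domi).
Qed.

Lemma continuity_2d_upd2 l : Dom l ->
  continuity_2d_pt (fun a b => pds l f (upd2 x i m a b)) 0 0.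
Proof.
  intros Hl eps; destruct (proj1 (proj2 Hf l Hl) x eps (cond_pos eps)) as [del [Hdel Hc]].
  exists (mkposreal del Hdel); intros a b Ha Hb; simpl in Ha, Hb.
  rewrite Rminus_0_r in Ha, Hb; rewrite upd2_0; apply Hc; intros j _; unfold upd2.
  destruct (Nat.eqb_spec j i) as [->|]; [now replace (x i + a - x i) with a by ring|].
  destruct (Nat.eqb_spec j m) as [->|]; [now replace (x m + b - x m) with b by ring|].
  rewrite Rminus_diag, Rabs_R0; exact Hdel.
Qed.

Lemma pd_comm_distinct : pd i (pd m f) x = pd m (pd i f) x.
Proof.
  assert (HS := Schwarz F 0 0); rewrite Derive_upd2_mi, Derive_upd2_im, upd2_0 in HS.
  apply HS.
  - exists (mkposreal 1 Rlt_0_1); intros a b _ _; repeat split.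
    + exists (pd i f (upd2 x i m a b)); exact (is_derive_upd2_i nil a b Dom0).
    + exists (pd m f (upd2 x i m a b)); exact (is_derive_upd2_m nil a b Dom0).
    + apply (ex_derive_ext (fun z => pd m f (upd2 x i m z b))).
      { intros; symmetry; apply Derive_upd2_m. }
      exists (pd i (pd m f) (upd2 x i m a b)); exact (is_derive_upd2_i _ a b Domm).
    + apply (ex_derive_ext (fun z => pd i f (upd2 x i m a z))).
      { intros; symmetry; apply Derive_upd2_i. }
      exists (pd m (pd i f) (upd2 x i m a b)); exact (is_derive_upd2_m _ a b Domi).
  - intros eps; destruct (continuity_2d_upd2 (i :: m :: nil) (Forall_cons _ Hi Domm) eps)
      as [del Hd].
    exists del; intros a b Ha Hb; rewrite !Derive_upd2_mi; exact (Hd a b Ha Hb).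
  - intros eps; destruct (continuity_2d_upd2 (m :: i :: nil) (Forall_cons _ Hm Domi) eps)
      as [del Hd].
    exists del; intros a b Ha Hb; rewrite !Derive_upd2_im; exact (Hd a b Ha Hb).
Qed.

End Clairaut.

Lemma pd_comm i m x :
  (1 <= i <= d)%nat -> (1 <= m <= d)%nat -> pd i (pd m f) x = pd m (pd i f) x.
Proof.
  intros Hi Hm; destruct (Nat.eq_dec i m) as [->|Him]; [reflexivity|].
  exact (pd_comm_distinct x i m Hi Hm Him).
Qed.

End Smooth.

Definition grad (f : point -> R) (x : point) : nat -> R := fun m => pd m f x.

Section TwistedFields.
Variables (k : nat) (lam : R).

Definition twisted (c : nat -> R) (s : R) (f : point -> R) : vfield :=
  fun j y => c j + s * omega k lam (grad f y) (delta j).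

Lemma Xf_twisted u : Xf k u lam = twisted (fun j => delta j 2 + lam * delta j 3) (-1) u.
Proof.
  apply functional_extensionality; intros j; apply functional_extensionality; intros y.
  unfold Xf, twisted, omega, grad; ring.
Qed.

Lemma Yf_twisted v : Yf k v lam = twisted (fun j => delta j 1 + lam * delta j 2) 1 v.
Proof.
  apply functional_extensionality; intros j; apply functional_extensionality; intros y.
  unfold Yf, twisted, omega, grad; ring.
Qed.

Section Potential.
Variables (c : nat -> R) (s : R) (f : point -> R).
Hypothesis Hf : smooth (2 * k + 1) f.

Lemma pd_twisted i j x : (1 <= i <= 2 * k + 1)%nat ->
  pd i (twisted c s f j) x = s * omega k lam (fun m => pd i (pd m f) x) (delta j).
Proof.
  intros Hi; apply pd_of_lim; unfold twisted.
  replace (s * _) with (0 + s * (omega k lam (fun m => pd i (pd m f) x) (delta j)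
                          + omega k lam (grad f (upd x i 0)) (fun _ => 0))).
  - apply (derivable_pt_lim_plus (fun _ => c j)), derivable_pt_lim_scal;
      [apply derivable_pt_lim_const|].
    apply (omega_lim k lam (fun t => grad f (upd x i t)) (fun _ => delta j)); intros m Hm.
    + apply (smooth_pd_lim _ _ Hf); lia.
    + apply derivable_pt_lim_const.
  - rewrite (omega_antisym _ _ (grad f _)), (omega_0_l _ _ (fun _ => 0)) by reflexivity; ring.
Qed.

Lemma vapp_twisted_comp Z j x :
  vapp (2 * k + 1) Z (twisted c s f j) x
  = s * omega k lam (fun m => vapp (2 * k + 1) Z (pd m f) x) (delta j).
Proof.
  unfold vapp, sum_from_to.
  rewrite (rsum_ext _ _ _ (fun i => s * (Z i x * omega k lam (fun m => pd i (pd m f) x) (delta j))))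
    by (intros; rewrite pd_twisted by lia; ring).
  rewrite rsum_scal, (omega_sum_l k lam 1 _ (fun i => Z i x) (fun i m => pd i (pd m f) x)).
  reflexivity.
Qed.

Lemma vapp_twisted a b g x : (1 <= a <= 2 * k + 1)%nat -> (1 <= b <= 2 * k + 1)%nat ->
  vapp (2 * k + 1) (twisted (fun j => delta j a + lam * delta j b) s f) g x
  = pd a g x + lam * pd b g x + s * omega k lam (grad f x) (grad g x).
Proof.
  intros Ha Hb; unfold vapp, twisted, sum_from_to.
  rewrite (rsum_ext _ _ _ (fun i => pd i g x * delta i a + lam * (pd i g x * delta i b)
      + s * (pd i g x * omega k lam (grad f x) (delta i)))) by (intros; ring).
  rewrite !rsum_plus, !rsum_scal, !rsum_delta by lia.
  rewrite (omega_sum_r k lam 1 _ (fun i => pd i g x) (grad f x) delta).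
  rewrite (omega_ext k lam _ (grad f x) _ (grad g x)); [reflexivity..|].
  intros m Hm; apply rsum_delta; lia.
Qed.

End Potential.

Lemma bracket_twisted cX sX f cY sY g j x :
  smooth (2 * k + 1) f -> smooth (2 * k + 1) g ->
  bracket (2 * k + 1) (twisted cX sX f) (twisted cY sY g) j x
  = omega k lam (fun m => sY * vapp (2 * k + 1) (twisted cX sX f) (pd m g) x
                          - sX * vapp (2 * k + 1) (twisted cY sY g) (pd m f) x) (delta j).
Proof.
  intros Hf Hg; unfold bracket.
  rewrite omega_lin_l, !vapp_twisted_comp by assumption; reflexivity.
Qed.

End TwistedFields.

Section Constraint.
Variables (k : nat) (lam : R) (u v : point -> R).
Hypotheses (hk : (1 <= k)%nat)
  (hu : smooth (2 * k + 1) u) (hv : smooth (2 * k + 1) v).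

Definition constraint (y : point) : R :=
  pd 1 u y + lam * pd 2 u y + pd 2 v y + lam * pd 3 v y - omega k lam (grad u y) (grad v y).

Lemma constraint_lim q x : (1 <= q <= 2 * k + 1)%nat ->
  derivable_pt_lim (fun t => constraint (upd x q t)) 0
    (pd q (pd 1 u) x + lam * pd q (pd 2 u) x + pd q (pd 2 v) x + lam * pd q (pd 3 v) x
     - (omega k lam (fun m => pd q (pd m u) x) (grad v x)
        + omega k lam (grad u x) (fun m => pd q (pd m v) x))).
Proof.
  intros Hq; unfold constraint.
  assert (Hom := omega_lim k lam (fun t => grad u (upd x q t)) (fun t => grad v (upd x q t))
    (fun m => pd q (pd m u) x) (fun m => pd q (pd m v) x)).
  cbv beta in Hom; rewrite upd_0 in Hom.
  apply derivable_pt_lim_minus; [|apply Hom; intros m Hm; apply (smooth_pd_lim (2 * k + 1)); auto; lia].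
  repeat apply derivable_pt_lim_plus; try apply derivable_pt_lim_scal;
    apply (smooth_pd_lim (2 * k + 1)); auto; lia.
Qed.

Lemma grad_action_sum_0 q x :
  (forall y, constraint y = 0) -> (1 <= q <= 2 * k + 1)%nat ->
  vapp (2 * k + 1) (Xf k u lam) (pd q v) x + vapp (2 * k + 1) (Yf k v lam) (pd q u) x = 0.
Proof.
  intros H0 Hq.
  assert (HD := constraint_lim q x Hq).
  assert (Hconst : (fun t => constraint (upd x q t)) = (fun _ => 0))
    by (apply functional_extensionality; intros; apply H0).
  rewrite Hconst in HD; apply (uniqueness_limite _ _ _ _ (derivable_pt_lim_const 0 0)) in HD.
  rewrite Xf_twisted, Yf_twisted, !vapp_twisted by lia.
  rewrite (omega_ext k lam (grad u x) (grad u x) (grad (pd q v) x) (fun m => pd q (pd m v) x)),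
    (omega_ext k lam (grad v x) (grad v x) (grad (pd q u) x) (fun m => pd q (pd m u) x))
    by (reflexivity || (intros; apply (pd_comm (2 * k + 1)); auto; lia)).
  rewrite (omega_antisym k lam (grad v x)).
  rewrite !(pd_comm _ _ hu _ q), !(pd_comm _ _ hv _ q) by lia.
  lra.
Qed.

End Constraint.

Theorem mainTheorem7 (k : nat) (hk : (2 <= k)%nat)
  (u v : point -> R)
  (hu : smooth (2 * k + 1) u) (hv : smooth (2 * k + 1) v)
  (h1 : forall x : point,
      pd 1 u x + pd 2 v x =
      sum_from_to 2 k (fun s =>
        pd (2 * s - 1) u x * pd (2 * s) v x - pd (2 * s) u x * pd (2 * s - 1) v x))
  (h2 : forall x : point,
      pd 2 u x + pd 3 v x =
      sum_from_to 2 k (fun s =>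
        pd (2 * s) u x * pd (2 * s + 1) v x - pd (2 * s + 1) u x * pd (2 * s) v x)) :
  forall (lam : R) (j : nat) (x : point), (1 <= j <= 2 * k + 1)%nat ->
    bracket (2 * k + 1) (Xf k u lam) (Yf k v lam) j x = 0.
Proof.
  intros lam j x _.
  assert (Hc : forall y, constraint k lam u v y = 0).
  { intros y; unfold constraint; rewrite omega_parity; unfold grad; cbv beta.
    rewrite <- h1, <- h2; ring. }
  rewrite Xf_twisted, Yf_twisted, bracket_twisted by assumption.
  apply omega_0_l; intros q Hq.
  rewrite <- Xf_twisted, <- Yf_twisted.
  assert (HW := grad_action_sum_0 k lam u v ltac:(lia) hu hv q x Hc ltac:(lia)).
  lra.
Qed.
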